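(* Let $G$ be a connected graph containing a longest path $L=x_0x_1\ldots x_p$ and a path $P$ of length at least $p-2$. Suppose $|V(P)\cap V(L)|\ge 1$ and let $r=\lceil p/2\rceil$. Then: (1) if $V(P)\cap\{x_r,x_{r+1},\ldots,x_p\}=\emptyset$, then $x_{r-1}\in V(P)$; (2) if $V(P)\cap\{x_0,\ldots,x_{r-1}\}=\emptyset$ and $\ell(P)\ge p-1$, then $x_r\in V(P)$; (3) if $V(P)\cap\{x_0,\ldots,x_{r-1}\}=\emptyset$ and $\ell(P)=p-2$, then $x_r\in V(P)$ or $x_{r+1}\in V(P)$.
   Context: All graphs are finite, simple and undirected. $\ell(P)$ denotes the length (number of edges) of a path $P$; a longest path is one of maximum length in $G$. *)

From mathcomp Require Import all_boot.
Set Implicit Arguments. Unset Strict Implicit. Unset Printing Implicit Defensive.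

Definition simple_graph (T : finType) (e : rel T) :=
  symmetric e /\ irreflexive e.

Definition connected_graph (T : finType) (e : rel T) :=
  forall x y : T, connect e x y.

Definition gpath (T : finType) (e : rel T) (s : seq T) : bool :=
  if s is x :: s' then path e x s' && uniq s else false.

Definition plen (T : Type) (s : seq T) : nat := (size s).-1.

Definition longest_path (T : finType) (e : rel T) (L : seq T) :=
  gpath e L /\ forall Q, gpath e Q -> plen Q <= plen L.

From mathcomp Require Import all_boot.
From mathcomp Require Import zify.

Set Implicit Arguments.
Unset Strict Implicit.
Unset Printing Implicit Defensive.

(* If x_k is the first vertex of a longest path M = x_0 ... x_p lying on a
   path P, then x_0 ... x_k followed by the longer of the two pieces into
   which x_k cuts P is again a path, of length at least k + l(P)/2; hence
   2k + l(P) <= 2p.  Applied to L and to its reverse, this says how long P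
   can avoid an initial or a final segment of L, which gives all three
   claims. *)

Section SeqAvoid.

Variables (T : Type) (a : pred T) (x0 : T).

Lemma take_nth_hasNS (s : seq T) n :
  ~~ has a (take n s) -> ~~ a (nth x0 s n) -> ~~ has a (take n.+1 s).
Proof.
case: (ltnP n (size s)) => [lt_n_s | le_s_n].
  by rewrite (take_nth x0 lt_n_s) has_rcons => /negbTE-> /negbTE->.
by rewrite !take_oversize ?(leqW le_s_n).
Qed.

Lemma drop_nth_hasNS (s : seq T) n :
  ~~ has a (drop n.+1 s) -> ~~ a (nth x0 s n) -> ~~ has a (drop n s).
Proof.
case: (ltnP n (size s)) => [lt_n_s | le_s_n].
  by rewrite (drop_nth x0 lt_n_s) /= => /negbTE-> /negbTE->.
by rewrite (drop_oversize le_s_n).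
Qed.

End SeqAvoid.

Section GraphPaths.

Variables (T : finType) (e : rel T).
Hypothesis e_sym : symmetric e.

Lemma gpath_uniq s : gpath e s -> uniq s.
Proof. by case: s => [|x s] // /andP[]. Qed.

Lemma gpath_rev s : gpath e s -> gpath e (rev s).
Proof.
case: s => [|x s] //; case/lastP: s => [|t y] //= /andP[pth u].
rewrite -rcons_cons rev_rcons /= -[_ && uniq _]/(uniq (y :: _)) -rev_rcons.
rewrite rev_uniq rcons_cons; apply/andP; split; last exact: u.
have := rev_path e x (rcons t y); rewrite last_rcons belast_rcons => ->.
by rewrite (@eq_path _ _ e) // => b c /=; rewrite e_sym.
Qed.

Lemma gpath_catr A w B : gpath e (A ++ w :: B) -> gpath e (w :: B).
Proof.
case: A => [|a A] //= /andP[pth u].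
move: pth; rewrite cat_path => /andP[_ /= /andP[_ ->]] /=.
by move: u => /andP[_]; rewrite cat_uniq => /and3P[].
Qed.

Lemma gpath_take s n : gpath e s -> gpath e (take n.+1 s).
Proof.
case: s => [|x s] //= /andP[pth u].
rewrite -{1}(cat_take_drop n s) cat_path in pth; case/andP: pth => -> _ /=.
exact: (@take_uniq _ (x :: s) n.+1 u).
Qed.

Lemma gpath_rcons_cat S w Q :
  gpath e (rcons S w) -> gpath e (w :: Q) -> ~~ has (mem (rcons S w)) Q ->
  gpath e (rcons S w ++ Q).
Proof.
case: S => [|s S] //= /andP[pth1 u1] /andP[pth2 u2] disj.
rewrite cat_path pth1 last_rcons pth2 /=.
suff : uniq ((s :: rcons S w) ++ Q) by [].
by rewrite cat_uniq; apply/and3P; split=> //; case/andP: u2.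
Qed.

Lemma gpath_long_half P w : gpath e P -> w \in P ->
  exists Q : seq T,
    [/\ gpath e (w :: Q), plen P <= (size Q).*2 & {subset Q <= P}].
Proof.
move=> gP /splitPr eP; case: eP gP => A B gP.
have lenP : plen (A ++ w :: B) = size A + size B.
  by rewrite /plen size_cat /= addnS.
have [le_AB | lt_BA] := leqP (size A) (size B).
  exists B; split; first exact: gpath_catr gP.
  - by rewrite lenP -addnn leq_add2r.
  by move=> v vB; rewrite mem_cat in_cons vB !orbT.
exists (rev A); split.
- apply: (@gpath_catr (rev B)).
  by rewrite -cat_rcons -rev_cons -rev_cat; apply: gpath_rev.
- by rewrite size_rev lenP -addnn leq_add2l ltnW.
by move=> v; rewrite mem_rev mem_cat => ->.
Qed.

Lemma longest_path_rev L : longest_path e L -> longest_path e (rev L).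
Proof.
case=> gL maxL; split; first exact: gpath_rev.
by move=> Q /maxL; rewrite /plen size_rev.
Qed.

Lemma longest_path_take_hasN L P n :
  longest_path e L -> gpath e P -> has (mem P) L ->
  ~~ has (mem P) (take n L) -> n.*2 + plen P <= (plen L).*2.
Proof.
case: L => [|x0 L'] [gL maxL] // gP hasPL; set L := x0 :: L'.
rewrite has_take // -leqNgt => le_n_k; set k := find _ _ in le_n_k.
have lt_k_L : k < size L by rewrite -has_find.
set w := nth x0 L k; have wP : w \in P := nth_find x0 hasPL.
have avoidP : ~~ has (mem P) (take k L) by rewrite has_take // ltnn.
have [Q [gwQ lenP QP]] := gpath_long_half gP wP.
have gJ : gpath e (rcons (take k L) w ++ Q).
  apply: gpath_rcons_cat => //.
    by rewrite -take_nth //; apply: gpath_take.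
  apply/hasPn => v vQ; rewrite -[mem _ v]/(v \in _) mem_rcons in_cons negb_or.
  have -> /= : v != w.
    by apply: contraTneq vQ => ->; case/andP: (gpath_uniq gwQ).
  by apply: contraNN avoidP => vk; apply/hasP; exists v => //; apply: QP.
have := maxL _ gJ.
rewrite /plen size_cat size_rcons size_takel ?(ltnW lt_k_L) //=.
by move: lenP; rewrite /plen; lia.
Qed.

Lemma longest_path_drop_hasN L P n :
  longest_path e L -> gpath e P -> has (mem P) L ->
  ~~ has (mem P) (drop n L) -> (size L - n).*2 + plen P <= (plen L).*2.
Proof.
move=> lL gP hasPL avoidP.
have [le_L_n | lt_n_L] := leqP (size L) n.
  move/eqP: le_L_n => ->.
  by apply: (longest_path_take_hasN (n := 0) lL gP hasPL); rewrite take0.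
have -> : plen L = plen (rev L) by rewrite /plen size_rev.
apply: longest_path_take_hasN.
- exact: longest_path_rev.
- exact: gP.
- by rewrite has_rev.
by rewrite take_rev subKn ?(ltnW lt_n_L) // has_rev.
Qed.

End GraphPaths.

Theorem lemma3 (T : finType) (e : rel T) (x0 : T) (Ls P : seq T) :
  simple_graph e -> connected_graph e ->
  let L := x0 :: Ls in
  let p := plen L in
  let r := uphalf p in
  longest_path e L ->
  gpath e P ->
  p <= plen P + 2 ->
  has (fun v => v \in L) P ->
  [/\ (~~ has (fun v => v \in drop r L) P -> nth x0 L r.-1 \in P),
      (~~ has (fun v => v \in take r L) P -> p <= plen P + 1 -> nth x0 L r \in P)
    & (~~ has (fun v => v \in take r L) P -> plen P + 2 = p ->
         (nth x0 L r \in P) || (nth x0 L r.+1 \in P))].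
Proof.
move=> [e_sym _] _ L p r lL gP le_p_P; rewrite has_sym => hasPL.
have front n : ~~ has (mem P) (take n L) -> n.*2 + plen P <= p.*2.
  exact: longest_path_take_hasN.
have back n : ~~ has (mem P) (drop n L) -> (p.+1 - n).*2 + plen P <= p.*2.
  exact: longest_path_drop_hasN.
have r2 : r.*2 = odd p + p by rewrite uphalfK.
have odd_p : odd p <= 1 by case: odd.
split; rewrite -has_sym => avoidP.
- apply: contraT => xP.
  have r_gt0 : 0 < r.
    by rewrite lt0n; apply: contraNneq avoidP => ->; rewrite drop0.
  rewrite -(prednK r_gt0) in avoidP.
  by have := back _ (drop_nth_hasNS avoidP xP); lia.
- move=> lenP; apply: contraT => xP.
  by have := front _ (take_nth_hasNS avoidP xP); lia.
move=> lenP; apply: contraT; rewrite negb_or => /andP[xP yP].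
by have := front _ (take_nth_hasNS (take_nth_hasNS avoidP xP) yP); lia.
Qed.
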